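(* Let $E$ be a contact Riemannian Lie algebroid with associated almost contact Riemannian structure $(F_E,\xi,\eta,g_E)$, let $\nabla$ be the Levi-Civita connection of $g_E$ and $N_E^{(3)}=\frac12\mathcal{L}_\xi F_E$. Then for all $s,s_1,s_2\in\Gamma(E)$: (i) $g_E(N_E^{(3)}(s_1),s_2)=g_E(s_1,N_E^{(3)}(s_2))$; (ii) $\nabla_s\xi=-F_E(s)-F_E(N_E^{(3)}(s))$; (iii) $F_E\circ N_E^{(3)}=-N_E^{(3)}\circ F_E$; (iv) $\operatorname{trace}N_E^{(3)}=0$, $\operatorname{trace}(N_E^{(3)}\circ F_E)=0$, $N_E^{(3)}(\xi)=0$, $\eta(N_E^{(3)}(s))=0$; (v) $(\nabla_{s_1}F_E)(s_2)+(\nabla_{F_E(s_1)}F_E)F_E(s_2)=2g_E(s_1,s_2)\xi-\eta(s_2)\big(s_1+N_E^{(3)}(s_1)+\eta(s_1)\xi\big)$.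
   Context: A Lie algebroid $(E,\rho_E,[\cdot,\cdot]_E)$ over $M$ is a vector bundle with anchor $\rho_E:E\to TM$ and Lie bracket on $\Gamma(E)$ with $[s_1,fs_2]_E=f[s_1,s_2]_E+\rho_E(s_1)(f)s_2$. For a 1-form $\eta$, $(d_E\eta)(s_1,s_2)=\frac12\{\rho_E(s_1)(\eta(s_2))-\rho_E(s_2)(\eta(s_1))-\eta([s_1,s_2]_E)\}$. For $E$ of rank $2m+1$, an almost contact Riemannian structure $(F_E,\xi,\eta,g_E)$: endomorphism $F_E$, $\xi\in\Gamma(E)$, $\eta\in\Gamma(E^* )$, bundle metric $g_E$ with $F_E^2=-I_E+\eta\otimes\xi$, $\eta(\xi)=1$, $g_E(F_Es_1,F_Es_2)=g_E(s_1,s_2)-\eta(s_1)\eta(s_2)$; fundamental form $\Omega_E(s_1,s_2)=g_E(s_1,F_Es_2)$. $E$ is contact Riemannian if also $\eta\wedge(d_E\eta)^m$ vanishes nowhere and $d_E\eta=\Omega_E$. $(\mathcal{L}_\xi F_E)(s)=[\xi,F_Es]_E-F_E[\xi,s]_E$. The Levi-Civita connection $\nabla$ is the unique $E$-connection ($\nabla_{fs}s'=f\nabla_ss'$, $\nabla_s(fs')=f\nabla_ss'+\rho_E(s)(f)s'$) that is torsion-free ($\nabla_{s_1}s_2-\nabla_{s_2}s_1=[s_1,s_2]_E$) and metric ($\rho_E(s)(g_E(s_1,s_2))=g_E(\nabla_ss_1,s_2)+g_E(s_1,\nabla_ss_2)$); $(\nabla_sF_E)s'=\nabla_s(F_Es')-F_E(\nabla_ss')$.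 *)

From HB Require Import structures.
From mathcomp Require Import all_boot all_order all_algebra all_fingroup.
From mathcomp Require Import reals.
Set Implicit Arguments. Unset Strict Implicit. Unset Printing Implicit Defensive.
Import Order.TTheory GRing.Theory Num.Theory.
Local Open Scope ring_scope.

Section LieAlgebroidDefs.
Variables (R : realType) (C : comAlgType R) (V : lmodType C).
(* C plays the role of C^oo(M) (an R-algebra of real functions on M),
   V plays the role of Gamma(E) (a C-module). *)

(* D is a vector field, i.e. an R-linear derivation of C. *)
Definition is_derivation (D : C -> C) : Prop :=
  [/\ forall f h, D (f + h) = D f + D h,
      forall f h, D (f * h) = f * D h + D f * h
    & forall r : R, D (r%:A) = 0].

Record lie_algebroid (rho : V -> C -> C) (br : V -> V -> V) : Prop := {
  rho_add : forall s t f, rho (s + t) f = rho s f + rho t f;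
  rho_scale : forall (h : C) s f, rho (h *: s) f = h * rho s f;
  rho_der : forall s, is_derivation (rho s);
  br_addl : forall s t u, br (s + t) u = br s u + br t u;
  br_scalel : forall (r : R) s t, br (r%:A *: s) t = r%:A *: br s t;
  br_anti : forall s t, br s t = - br t s;
  br_jacobi : forall s t u, br s (br t u) + br t (br u s) + br u (br s t) = 0;
  br_leibniz : forall s t (f : C), br s (f *: t) = f *: br s t + rho s f *: t;
  rho_br : forall s t f, rho (br s t) f = rho s (rho t f) - rho t (rho s f)
}.

(* V is the module of smooth sections of a real vector bundle of rank rk over
   the point set M:  ev x is evaluation of functions at the point x, C is a
   separating algebra of real functions, and (e, eps) is a finite dual basis
   exhibiting V as a finitely generated projective C-module (Serre-Swan),
   whose fibre dimension at every point is rk. *)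
Record vector_bundle (M : Type) (ev : M -> C -> R) (n : nat)
    (e : 'I_n -> V) (eps : 'I_n -> V -> C) (rk : nat) : Prop := {
  ev_add : forall x f h, ev x (f + h) = ev x f + ev x h;
  ev_mul : forall x f h, ev x (f * h) = ev x f * ev x h;
  ev_alg : forall x (r : R), ev x (r%:A) = r;
  ev_sep : forall f, (forall x, ev x f = 0) -> f = 0;
  eps_add : forall i s t, eps i (s + t) = eps i s + eps i t;
  eps_scale : forall i (h : C) s, eps i (h *: s) = h * eps i s;
  dual_basis : forall s, s = \sum_(i < n) eps i s *: e i;
  fibre_rank : forall x, ev x (\sum_(i < n) eps i (e i)) = rk%:R
}.

Definition vanish_at (M : Type) (ev : M -> C -> R) (n : nat)
    (eps : 'I_n -> V -> C) (x : M) (s : V) : Prop :=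
  forall i, ev x (eps i s) = 0.

Record almost_contact_riem (M : Type) (ev : M -> C -> R) (n : nat)
    (eps : 'I_n -> V -> C)
    (F : V -> V) (xi : V) (eta : V -> C) (g : V -> V -> C) : Prop := {
  F_add : forall s t, F (s + t) = F s + F t;
  F_scale : forall (h : C) s, F (h *: s) = h *: F s;
  eta_add : forall s t, eta (s + t) = eta s + eta t;
  eta_scale : forall (h : C) s, eta (h *: s) = h * eta s;
  g_addl : forall s t u, g (s + t) u = g s u + g t u;
  g_scalel : forall (h : C) s t, g (h *: s) t = h * g s t;
  g_sym : forall s t, g s t = g t s;
  g_pos : forall x s, 0 <= ev x (g s s);
  g_def : forall x s, ev x (g s s) = 0 -> vanish_at ev eps x s;
  F_sq : forall s, F (F s) = - s + eta s *: xi;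
  eta_xi : eta xi = 1;
  g_F : forall s t, g (F s) (F t) = g s t - eta s * eta t
}.

(* d_E eta, with the 1/2 convention of the paper *)
Definition dE (rho : V -> C -> C) (br : V -> V -> V) (eta : V -> C)
    (s t : V) : C :=
  (2^-1 : R)%:A * (rho s (eta t) - rho t (eta s) - eta (br s t)).

Definition Omega (g : V -> V -> C) (F : V -> V) (s t : V) : C := g s (F t).

(* (eta /\ om^m)(s_0, ..., s_2m), up to a nonzero normalising constant:
   sum over sigma in S_{2m+1} of sgn(sigma) eta(s_sigma(0))
   prod_{k<m} om(s_sigma(2k+1), s_sigma(2k+2)). *)
Definition eta_wedge_pow (m : nat) (eta : V -> C) (om : V -> V -> C)
    (s : 'I_(m.*2.+1) -> V) : C :=
  \sum_(sg : 'S_(m.*2.+1))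
     (-1) ^+ (odd_perm sg) *
     (eta (s (sg ord0)) *
      \prod_(k < m) om (s (sg (inord k.*2.+1))) (s (sg (inord k.*2.+2)))).

Definition contact_riem (M : Type) (ev : M -> C -> R) (n : nat)
    (eps : 'I_n -> V -> C) (m : nat)
    (rho : V -> C -> C) (br : V -> V -> V)
    (F : V -> V) (xi : V) (eta : V -> C) (g : V -> V -> C) : Prop :=
  [/\ almost_contact_riem ev eps F xi eta g,
      (forall x : M, exists s : 'I_(m.*2.+1) -> V,
          ev x (eta_wedge_pow eta (dE rho br eta) s) != 0)
    & forall s t, dE rho br eta s t = Omega g F s t].

Record levi_civita (rho : V -> C -> C) (br : V -> V -> V)
    (g : V -> V -> C) (nabla : V -> V -> V) : Prop := {
  nab_addl : forall s t u, nabla (s + t) u = nabla s u + nabla t u;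
  nab_scalel : forall (h : C) s u, nabla (h *: s) u = h *: nabla s u;
  nab_addr : forall s t u, nabla s (t + u) = nabla s t + nabla s u;
  nab_leibniz : forall s (h : C) u,
      nabla s (h *: u) = h *: nabla s u + rho s h *: u;
  nab_torsion : forall s t, nabla s t - nabla t s = br s t;
  nab_metric : forall s t u,
      rho s (g t u) = g (nabla s t) u + g t (nabla s u)
}.

(* N^(3) = 1/2 L_xi F *)
Definition lieF (br : V -> V -> V) (F : V -> V) (xi : V) (s : V) : V :=
  br xi (F s) - F (br xi s).
Definition N3 (br : V -> V -> V) (F : V -> V) (xi : V) (s : V) : V :=
  (2^-1 : R)%:A *: lieF br F xi s.

Definition trace (n : nat) (e : 'I_n -> V) (eps : 'I_n -> V -> C)
    (T : V -> V) : C :=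
  \sum_(i < n) eps i (T (e i)).

Definition covF (nabla : V -> V -> V) (F : V -> V) (s t : V) : V :=
  nabla s (F t) - F (nabla s t).

End LieAlgebroidDefs.

(* Everything rests on the compatibility d eta = Phi.  Evaluated at xi it gives
   eta [xi, s] = xi (eta s), so h = L_xi F kills xi, takes values in ker eta and
   anticommutes with F; the closedness of Phi = d eta gives
   (L_xi g)(X, Y) = g (X, h (F Y)), and the symmetry of L_xi g makes h, hence
   N = h / 2, symmetric.  The Koszul formula then reduces to nabla xi = - F - F N.
   Since tr (A B) = tr (B A), a product A B of anticommuting endomorphisms is
   traceless, and both N = F (N F) and N F are of this form.  For (v), the form
   T (X, Y, Z) = g ((nabla_X F) Y, Z) is skew in (Y, Z) and has vanishing cyclic
   sum because Phi is closed; with the values of g (nabla_X xi, -) already known,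
   these two symmetries determine T (X, Y, Z) + T (F X, F Y, Z), as in Blair's
   computation for contact metric manifolds. *)

From HB Require Import structures.
From mathcomp Require Import all_boot all_order all_algebra all_fingroup.
From mathcomp Require Import reals ring.
Import Order.TTheory GRing.Theory Num.Theory.
Local Open Scope ring_scope.

Set Implicit Arguments.
Unset Strict Implicit.
Unset Printing Implicit Defensive.

Section AdditiveMap.
Variables (U W : zmodType) (f : U -> W).
Hypothesis fD : {morph f : x y / x + y}.

Lemma addmorph0 : f 0 = 0.
Proof. by apply/eqP; rewrite -(subrr (f 0)) -[X in f X - _]addr0 fD addrK. Qed.

Lemma addmorphN x : f (- x) = - f x.
Proof. by apply/eqP; rewrite -subr_eq0 opprK -fD addNr addmorph0. Qed.

End AdditiveMap.

Section HalfInAlgebra.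
Variables (R : realType) (C : comAlgType R).

Lemma mul2_half : 2 * (2^-1 : R)%:A = 1 :> C.
Proof.
rewrite mulrDl mul1r -scalerDl.
have -> : (2^-1 + 2^-1 : R) = 1 by field.
exact: scale1r.
Qed.

Lemma mul2I (a b : C) : 2 * a = 2 * b -> a = b.
Proof.
move=> /(congr1 (fun c => (2^-1 : R)%:A * c)).
by rewrite !mulrA ![_ * 2]mulrC mul2_half !mul1r.
Qed.

Lemma addrr_eq0 (c : C) : c + c = 0 -> c = 0.
Proof. by move=> cc0; apply: mul2I; rewrite mulr0 mulrDl mul1r. Qed.

Lemma addvv_eq0 (V : lmodType C) (v : V) : v + v = 0 -> v = 0.
Proof.
move=> vv0; rewrite -[v]scale1r -mul2_half mulrC -scalerA.
by rewrite scalerDl scale1r vv0 scaler0.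
Qed.

End HalfInAlgebra.

Section Derivation.
Variables (R : realType) (C : comAlgType R) (D : C -> C).
Hypothesis derD : is_derivation D.

Lemma derivationD : {morph D : f h / f + h}.
Proof. by case: derD. Qed.

Lemma derivationM f h : D (f * h) = f * D h + D f * h.
Proof. by case: derD. Qed.

Lemma derivation_alg (r : R) : D r%:A = 0.
Proof. by case: derD. Qed.

Lemma derivation0 : D 0 = 0.
Proof. exact: addmorph0 derivationD. Qed.

Lemma derivationN f : D (- f) = - D f.
Proof. exact: (addmorphN derivationD f). Qed.

Lemma derivation1 : D 1 = 0.
Proof. by rewrite -(derivation_alg 1) scale1r. Qed.

Lemma derivation_mul2 f : D (2 * f) = 2 * D f.
Proof. by rewrite derivationM -[2 : C]/(1 + 1) derivationD derivation1 addr0 mul0r addr0. Qed.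

End Derivation.

Section LieAlgebroid.
Variables (R : realType) (C : comAlgType R) (V : lmodType C)
  (rho : V -> C -> C) (br : V -> V -> V).
Hypothesis LA : lie_algebroid rho br.

Lemma anchorD s : {morph rho s : f h / f + h}.
Proof. exact: derivationD (rho_der LA s). Qed.

Lemma anchorM s f h : rho s (f * h) = f * rho s h + rho s f * h.
Proof. exact: (derivationM (rho_der LA s) f h). Qed.

Lemma anchor0 s : rho s 0 = 0.
Proof. exact: derivation0 (rho_der LA s). Qed.

Lemma anchorN s f : rho s (- f) = - rho s f.
Proof. exact: (derivationN (rho_der LA s) f). Qed.

Lemma anchor1 s : rho s 1 = 0.
Proof. exact: derivation1 (rho_der LA s). Qed.

Lemma br_addr u : {morph br u : s t / s + t}.
Proof. by move=> s t; rewrite (br_anti LA) (br_addl LA) opprD -!(br_anti LA). Qed.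

Lemma br0r s : br s 0 = 0.
Proof. exact: addmorph0 (br_addr s). Qed.

Lemma br_oppr s t : br s (- t) = - br s t.
Proof. exact: (addmorphN (br_addr s) t). Qed.

Lemma brr s : br s s = 0.
Proof. by apply: addvv_eq0; rewrite {1}(br_anti LA) addNr. Qed.

Lemma mul2_dE (eta : V -> C) s t :
  2 * dE rho br eta s t = rho s (eta t) - rho t (eta s) - eta (br s t).
Proof. by rewrite /dE mulrA mul2_half mul1r. Qed.

Lemma dE_closed (eta : V -> C) : {morph eta : s t / s + t} -> forall X Y Z,
  rho X (dE rho br eta Y Z) + rho Y (dE rho br eta Z X) + rho Z (dE rho br eta X Y)
  - dE rho br eta (br X Y) Z - dE rho br eta (br Y Z) X
  - dE rho br eta (br Z X) Y = 0.
Proof.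
move=> etaD X Y Z; apply: mul2I; rewrite mulr0 !(mulrBr, mulrDr).
rewrite -!(derivation_mul2 (rho_der LA _)) !mul2_dE.
rewrite !(br_anti LA (br _ _)) !(addmorphN etaD) !(anchorD, anchorN, rho_br LA).
have := congr1 eta (br_jacobi LA Z X Y).
rewrite (addmorph0 etaD) !etaD => /eqP; rewrite -addrA addr_eq0 => /eqP ->.
ring.
Qed.

End LieAlgebroid.

Section Trace.
Variables (R : realType) (C : comAlgType R) (V : lmodType C) (M : Type)
  (ev : M -> C -> R) (n : nat) (e : 'I_n -> V) (eps : 'I_n -> V -> C) (rk : nat).
Hypothesis VB : vector_bundle ev e eps rk.

Lemma linear_dual_basis (A : V -> V) s : linear A ->
  A s = \sum_(i < n) eps i s *: A (e i).
Proof.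
move=> linA; have A0 : A 0 = 0.
  have := linA 1 0 0; rewrite !scale1r addr0 => /esym/eqP.
  by rewrite -subr_eq0 addrK => /eqP.
rewrite {1}(dual_basis VB s).
apply: (big_ind2 (fun x y => A x = y)) => [//|x1 x2 y1 y2 <- <-|i _].
- by rewrite -{1}[x1]scale1r linA scale1r.
- by rewrite -[_ *: _]addr0 linA A0 addr0.
Qed.

Lemma eps_sum i (c : 'I_n -> C) (v : 'I_n -> V) :
  eps i (\sum_(j < n) c j *: v j) = \sum_(j < n) c j * eps i (v j).
Proof.
apply: (big_ind2 (fun x y => eps i x = y)) => [|x1 x2 y1 y2 <- <-|j _].
- by have := eps_scale VB i 0 0; rewrite scale0r mul0r.
- by rewrite (eps_add VB).
- by rewrite (eps_scale VB).
Qed.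

Lemma trace_compC (A B : V -> V) : linear A -> linear B ->
  trace e eps (fun s => A (B s)) = trace e eps (fun s => B (A s)).
Proof.
move=> linA linB.
have expand P Q : linear P -> trace e eps (fun s => P (Q s)) =
    \sum_(i < n) \sum_(j < n) eps j (Q (e i)) * eps i (P (e j)).
  by move=> linP; apply: eq_bigr => i _; rewrite linear_dual_basis // eps_sum.
rewrite !expand // exchange_big.
by apply: eq_bigr => i _; apply: eq_bigr => j _; rewrite mulrC.
Qed.

Lemma trace_anticomm (A B : V -> V) : linear A -> linear B ->
  (forall s, A (B s) = - B (A s)) -> trace e eps (fun s => A (B s)) = 0.
Proof.
move=> linA linB AB; apply: addrr_eq0.
rewrite {1}trace_compC // /trace -big_split; apply: big1 => i _.
by rewrite AB (addmorphN (eps_add VB i)); apply: addrN.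
Qed.

End Trace.

Section ContactRiemannian.
Variables (R : realType) (C : comAlgType R) (V : lmodType C) (M : Type)
  (ev : M -> C -> R) (n : nat) (e : 'I_n -> V) (eps : 'I_n -> V -> C) (rk : nat)
  (rho : V -> C -> C) (br : V -> V -> V)
  (F : V -> V) (xi : V) (eta : V -> C) (g : V -> V -> C) (nabla : V -> V -> V).
Hypotheses (LA : lie_algebroid rho br) (VB : vector_bundle ev e eps rk)
  (AC : almost_contact_riem ev eps F xi eta g) (LC : levi_civita rho br g nabla).
Hypothesis dE_Omega : forall s t, dE rho br eta s t = Omega g F s t.

Local Notation L := (lieF br F xi).
Local Notation N := (N3 br F xi).

Lemma mulrr_eq0 (c : C) : c * c = 0 -> c = 0.
Proof.
move=> cc0; apply: (ev_sep VB) => x; apply/eqP.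
have : ev x (c * c) == 0 by rewrite cc0 (addmorph0 (ev_add VB x)).
by rewrite (ev_mul VB) mulf_eq0 orbb.
Qed.

Lemma g_addr u : {morph g u : s t / s + t}.
Proof. by move=> s t; rewrite !(g_sym AC u) (g_addl AC). Qed.

Lemma g_scaler (c : C) s t : g t (c *: s) = c * g t s.
Proof. by rewrite (g_sym AC) (g_scalel AC) (g_sym AC). Qed.

Lemma g0l t : g 0 t = 0.
Proof. by have := g_scalel AC 0 0 t; rewrite scale0r mul0r. Qed.

Lemma g0r t : g t 0 = 0.
Proof. by rewrite (g_sym AC) g0l. Qed.

Lemma g_oppl s t : g (- s) t = - g s t.
Proof. by rewrite -scaleN1r (g_scalel AC) mulN1r. Qed.

Lemma g_oppr s t : g t (- s) = - g t s.
Proof. by rewrite -scaleN1r g_scaler mulN1r. Qed.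

Lemma g_nondeg u v : (forall z, g u z = g v z) -> u = v.
Proof.
move=> guv; apply/eqP; rewrite -subr_eq0; apply/eqP.
have gw : g (u - v) (u - v) = 0 by rewrite (g_addl AC) g_oppl guv subrr.
rewrite (dual_basis VB (u - v)); apply: big1 => i _.
suff -> : eps i (u - v) = 0 by rewrite scale0r.
apply: (ev_sep VB) => x; apply: (g_def AC).
by rewrite gw (addmorph0 (ev_add VB x)).
Qed.

Lemma F0 : F 0 = 0.
Proof. by have := F_scale AC 0 0; rewrite !scale0r. Qed.

Lemma F_opp s : F (- s) = - F s.
Proof. by rewrite -scaleN1r (F_scale AC) scaleN1r. Qed.

Lemma F_linear : linear F.
Proof. by move=> a u v; rewrite (F_add AC) (F_scale AC). Qed.

Lemma eta0 : eta 0 = 0.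
Proof. by have := eta_scale AC 0 0; rewrite scale0r mul0r. Qed.

Lemma eta_opp s : eta (- s) = - eta s.
Proof. by rewrite -scaleN1r (eta_scale AC) mulN1r. Qed.

(* Expanding [F^3 s] as [F^2 (F s)] and as [F (F^2 s)]. *)
Lemma eta_scale_F_xi s : eta s *: F xi = eta (F s) *: xi.
Proof.
have := F_sq AC (F s).
by rewrite [F (F s)](F_sq AC) (F_add AC) F_opp (F_scale AC) => /addrI.
Qed.

Lemma F_xi : F xi = 0.
Proof.
(* [F xi = c *: xi] with [c = eta (F xi)], and [F (F xi) = 0] forces [c * c = 0]. *)
have := eta_scale_F_xi xi; rewrite (eta_xi AC) scale1r => Fxi.
suff c0 : eta (F xi) = 0 by rewrite Fxi c0 scale0r.
apply: mulrr_eq0.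
have : (eta (F xi) * eta (F xi)) *: xi = 0.
  by rewrite -scalerA -Fxi -(F_scale AC) -Fxi (F_sq AC) (eta_xi AC) scale1r addNr.
by move/(congr1 eta); rewrite eta0 (eta_scale AC) (eta_xi AC) mulr1.
Qed.

Lemma eta_F s : eta (F s) = 0.
Proof.
have := eta_scale_F_xi s; rewrite F_xi scaler0 => /(congr1 eta).
by rewrite eta0 (eta_scale AC) (eta_xi AC) mulr1.
Qed.

Lemma g_xi s : g s xi = eta s.
Proof.
by have := g_F AC s xi; rewrite F_xi g0r (eta_xi AC) mulr1 => /esym/subr0_eq.
Qed.

Lemma g_xil s : g xi s = eta s.
Proof. by rewrite (g_sym AC) g_xi. Qed.

Lemma g_Fl s t : g (F s) t = - g s (F t).
Proof.
have := g_F AC s (F t); rewrite eta_F mulr0 subr0 (F_sq AC).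
by rewrite g_addr g_oppr g_scaler g_xi eta_F mulr0 addr0 => <-; rewrite opprK.
Qed.

Lemma nabla0r s : nabla s 0 = 0.
Proof. exact: (addmorph0 (nab_addr LC s)). Qed.

Lemma nabla_oppr s t : nabla s (- t) = - nabla s t.
Proof. exact: (addmorphN (nab_addr LC s) t). Qed.

Lemma koszul X Y Z :
  2 * g (nabla X Y) Z = rho X (g Y Z) + rho Y (g X Z) - rho Z (g X Y)
    + g (br X Y) Z - g (br X Z) Y - g (br Y Z) X.
Proof.
rewrite -!(nab_torsion LC) !(nab_metric LC) !(g_addl AC) !g_oppl.
rewrite (g_sym AC Y (nabla X Z)) (g_sym AC X (nabla Y Z)) (g_sym AC X (nabla Z Y)).
ring.
Qed.

Lemma eta_br_xi t : eta (br xi t) = rho xi (eta t).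
Proof.
have := mul2_dE rho br eta xi t.
rewrite dE_Omega /Omega g_xil eta_F mulr0 (eta_xi AC) (anchor1 LA) subr0.
by move=> /esym/subr0_eq ->.
Qed.

Lemma lieF_xi : L xi = 0.
Proof. by rewrite /lieF F_xi (br0r LA) (brr LA) F0 subrr. Qed.

Lemma eta_lieF s : eta (L s) = 0.
Proof. by rewrite /lieF (eta_add AC) eta_opp eta_br_xi !eta_F (anchor0 LA) subrr. Qed.

Lemma lieF_add : {morph L : s t / s + t}.
Proof.
by move=> s t; rewrite /lieF (F_add AC) !(br_addr LA) (F_add AC) opprD addrACA.
Qed.

Lemma lieF_scale (c : C) s : L (c *: s) = c *: L s.
Proof.
rewrite /lieF (F_scale AC) !(br_leibniz LA) (F_add AC) !(F_scale AC).
by rewrite scalerBr opprD addrACA subrr addr0.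
Qed.

Lemma lieF_F s : L (F s) = - F (L s).
Proof.
apply: g_nondeg => z.
rewrite /lieF (F_add AC) F_opp !(F_sq AC) !(br_addr LA) (br_oppr LA) (br_leibniz LA).
rewrite (brr LA) scaler0 add0r ?(g_addl AC, g_oppl, g_scalel AC) eta_br_xi !g_xil.
ring.
Qed.

Definition lieg X Z := rho xi (g X Z) - g (br xi X) Z - g X (br xi Z).

Lemma lieg_sym X Z : lieg X Z = lieg Z X.
Proof. by rewrite /lieg (g_sym AC X Z) (g_sym AC X) (g_sym AC _ Z); ring. Qed.

Lemma lieg_F X Y : lieg X (F Y) = - g X (L Y).
Proof.
have := dE_closed LA (eta_add AC) xi X Y; rewrite !dE_Omega /Omega.
rewrite F_xi g0r g_xil eta_F !(anchor0 LA) (br_anti LA Y xi) g_oppl g0r.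
rewrite /lieg /lieF g_addr g_oppr (g_sym AC X (F (br xi Y))) g_Fl => closed.
by apply: subr0_eq; rewrite -closed; ring.
Qed.

Lemma lieg_lieF X Y : lieg X Y = g X (L (F Y)).
Proof.
have liegD Z1 Z2 : lieg X (Z1 + Z2) = lieg X Z1 + lieg X Z2.
  by rewrite /lieg !g_addr (anchorD LA) (br_addr LA) g_addr; ring.
have liegZ (c : C) Z : lieg X (c *: Z) = c * lieg X Z.
  by rewrite /lieg !g_scaler (anchorM LA) (br_leibniz LA) g_addr !g_scaler; ring.
have liegN Z : lieg X (- Z) = - lieg X Z.
  by rewrite -scaleN1r liegZ mulN1r.
have lieg_xi : lieg X xi = 0.
  by rewrite /lieg !g_xi eta_br_xi (brr LA) g0r subr0 subrr.
have Ydec : Y = - F (F Y) + eta Y *: xi by rewrite (F_sq AC) opprD opprK subrK.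
by rewrite {1}Ydec liegD liegN liegZ lieg_xi mulr0 addr0 lieg_F opprK.
Qed.

Lemma g_lieF_sym X Y : g (L X) Y = g X (L Y).
Proof.
have LX : L X = F (L (F X)) by rewrite lieF_F F_opp (F_sq AC) eta_lieF scale0r addr0 opprK.
rewrite LX g_Fl (g_sym AC (L (F X))) -lieg_lieF lieg_sym lieg_lieF (F_sq AC).
by rewrite lieF_add (addmorphN lieF_add) lieF_scale lieF_xi scaler0 addr0 g_oppr opprK.
Qed.

Lemma N3_xi : N xi = 0.
Proof. by rewrite /N3 lieF_xi scaler0. Qed.

Lemma eta_N3 s : eta (N s) = 0.
Proof. by rewrite /N3 (eta_scale AC) eta_lieF mulr0. Qed.

Lemma F_N3 s : F (N s) = - N (F s).
Proof. by rewrite /N3 (F_scale AC) lieF_F scalerN opprK. Qed.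

Lemma N3_sym X Y : g (N X) Y = g X (N Y).
Proof. by rewrite /N3 (g_scalel AC) g_scaler g_lieF_sym. Qed.

Lemma N3_add : {morph N : s t / s + t}.
Proof. by move=> s t; rewrite /N3 lieF_add scalerDr. Qed.

Lemma N3_scale (c : C) s : N (c *: s) = c *: N s.
Proof. by rewrite /N3 lieF_scale !scalerA mulrC. Qed.

Lemma N3_linear : linear N.
Proof. by move=> a u v; rewrite N3_add N3_scale. Qed.

Lemma N3_FF s : N (F (F s)) = - N s.
Proof.
by rewrite (F_sq AC) N3_add (addmorphN N3_add) N3_scale N3_xi scaler0 addr0.
Qed.

Lemma trace_N3 : trace e eps N = 0.
Proof.
transitivity (trace e eps (fun s => F (N (F s)))).
  by apply: eq_bigr => i _; rewrite F_N3 N3_FF opprK.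
apply: (trace_anticomm VB F_linear) => [a u v|s]; first by rewrite F_linear N3_linear.
exact: F_N3.
Qed.

Lemma trace_N3F : trace e eps (fun s => N (F s)) = 0.
Proof. by apply: (trace_anticomm VB N3_linear F_linear) => s; rewrite F_N3 opprK. Qed.

Lemma nabla_xi X : nabla X xi = - F X - F (N X).
Proof.
apply: g_nondeg => Z; apply: mul2I.
have -> : g (- F X - F (N X)) Z = g X (F Z) + (2^-1 : R)%:A * g Z (L (F X)).
  by rewrite F_N3 opprK (g_addl AC) g_oppl g_Fl opprK /N3 (g_scalel AC) (g_sym AC (L _)).
rewrite mulrDr mulrA mul2_half mul1r koszul g_xil !g_xi (br_anti LA X xi) g_oppl.
rewrite -lieg_lieF lieg_sym /lieg (g_sym AC X (br xi Z)).
have := mul2_dE rho br eta X Z; rewrite dE_Omega /Omega => ->.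
ring.
Qed.

Lemma g_covF X Y Z :
  g (covF nabla F X Y) Z = g (nabla X (F Y)) Z + g (nabla X Y) (F Z).
Proof. by rewrite /covF (g_addl AC) g_oppl g_Fl opprK. Qed.

Lemma g_covF_skew X Y Z : g (covF nabla F X Y) Z = - g (covF nabla F X Z) Y.
Proof.
have metF := nab_metric LC X (F Y) Z.
rewrite g_Fl (anchorN LA) (nab_metric LC) in metF.
rewrite !g_covF (g_sym AC (nabla X (F Z))) (g_sym AC (nabla X Z)).
have -> : g (nabla X (F Y)) Z
    = - (g (nabla X Y) (F Z) + g Y (nabla X (F Z))) - g (F Y) (nabla X Z).
  by rewrite metF; ring.
ring.
Qed.

Lemma g_covF_cyclic X Y Z :
  g (covF nabla F X Y) Z + g (covF nabla F Y Z) X + g (covF nabla F Z X) Y = 0.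
Proof.
have closed := dE_closed LA (eta_add AC) X Y Z.
rewrite !dE_Omega /Omega !(nab_metric LC) -!(nab_torsion LC) in closed.
rewrite !(g_addl AC) !g_oppl !(g_sym AC _ (nabla _ _)) in closed.
rewrite g_covF_skew (g_covF_skew Y) (g_covF_skew Z) !g_covF -oppr0 -closed.
ring.
Qed.

Lemma anchor_eta X Y : rho X (eta Y) = eta (nabla X Y) + g (nabla X xi) Y.
Proof. by rewrite -[eta Y]g_xi (nab_metric LC) g_xi (g_sym AC Y). Qed.

Lemma g_covF_F X Y Z :
  g (covF nabla F X (F Y)) Z
  = g (covF nabla F X Y) (F Z) + g (nabla X xi) Y * eta Z + eta Y * g (nabla X xi) Z.
Proof.
rewrite !g_covF !(F_sq AC) (nab_addr LC) nabla_oppr (nab_leibniz LC).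
rewrite ?(g_addl AC, g_oppl, g_scalel AC, g_addr, g_oppr, g_scaler) g_xi g_xil.
rewrite anchor_eta; ring.
Qed.

Lemma g_covF_xi X Z : g (covF nabla F X xi) Z = g (nabla X xi) (F Z).
Proof. by rewrite g_covF F_xi nabla0r g0l add0r. Qed.

Lemma g_nabla_xi_F X Y : g (nabla X xi) (F Y) = - g X Y + eta X * eta Y - g (N X) Y.
Proof.
by rewrite nabla_xi (g_addl AC) !g_oppl !(g_F AC) eta_N3 mul0r subr0; ring.
Qed.

Lemma g_nabla_F_xi X Y : g (nabla (F X) xi) Y = g X Y - eta X * eta Y - g (N X) Y.
Proof.
rewrite nabla_xi F_N3 N3_FF opprK (F_sq AC).
by rewrite ?(g_addl AC, g_oppl, g_scalel AC) g_xil; ring.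
Qed.

Lemma g_covF_pair_cyclic X Y Z :
  g (covF nabla F X Y + covF nabla F (F X) (F Y)) Z
    + g (covF nabla F Z X + covF nabla F (F Z) (F X)) Y
  = eta X * g (nabla Y xi) (F Z) - eta Z * g (nabla Y xi) (F X)
    + eta Z * g (nabla (F X) xi) Y + eta Y * g (nabla (F X) xi) Z.
Proof.
have cycF := g_covF_cyclic (F X) Y (F Z).
move/eqP: cycF; rewrite -addrA addr_eq0 => /eqP cycF.
have cyc := g_covF_cyclic Z X Y.
move/eqP: cyc; rewrite -addrA addr_eq0 => /eqP cyc.
have YFZ := g_covF_F Y Z (F X); rewrite eta_F mulr0 addr0 in YFZ.
have TFF : g (covF nabla F Y Z) (F (F X))
    = - g (covF nabla F Y Z) X + eta X * g (covF nabla F Y Z) xi.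
  by rewrite (F_sq AC) g_addr g_oppr g_scaler.
have Txi : g (covF nabla F Y Z) xi = - g (nabla Y xi) (F Z).
  by rewrite g_covF_skew g_covF_xi.
rewrite (g_addl AC (covF nabla F X Y)) (g_addl AC (covF nabla F Z X)) (g_covF_F (F X)).
ring: cycF cyc YFZ TFF Txi.
Qed.

Lemma covF_identity X Y :
  covF nabla F X Y + covF nabla F (F X) (F Y)
  = (2 * g X Y) *: xi - eta Y *: (X + N X + eta X *: xi).
Proof.
apply: g_nondeg => Z; apply: mul2I.
have c1 := g_covF_pair_cyclic X Y Z.
have c2 := g_covF_pair_cyclic Y Z X.
have c3 := g_covF_pair_cyclic Z X Y.
set s1 := g _ Z in c1 c2 *; set s2 := g _ X in c2 c3; set s3 := g _ Y in c1 c3.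
rewrite (_ : 2 * s1 = (s1 + s3) + (s2 + s1) - (s3 + s2)); last by ring.
rewrite c1 c2 c3 !g_nabla_xi_F !g_nabla_F_xi.
rewrite (g_addl AC ((2 * g X Y) *: xi)) g_oppl (g_scalel AC (2 * g X Y)).
rewrite (g_scalel AC (eta Y)) (g_addl AC (X + N X)) (g_addl AC X).
rewrite (g_scalel AC (eta X)) !g_xil.
have gN a b : g (N a) b = g (N b) a by rewrite N3_sym (g_sym AC).
ring: (g_sym AC Y X) (g_sym AC Z X) (g_sym AC Z Y) (gN Y X) (gN Z X) (gN Z Y).
Qed.

End ContactRiemannian.

Theorem proposition4p4
  (R : realType) (C : comAlgType R) (V : lmodType C) (M : Type)
  (ev : M -> C -> R) (n : nat) (e : 'I_n -> V) (eps : 'I_n -> V -> C)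
  (m : nat) (rho : V -> C -> C) (br : V -> V -> V)
  (F : V -> V) (xi : V) (eta : V -> C) (g : V -> V -> C)
  (nabla : V -> V -> V) :
  lie_algebroid rho br ->
  vector_bundle ev e eps m.*2.+1 ->
  contact_riem ev eps m rho br F xi eta g ->
  levi_civita rho br g nabla ->
  let N := N3 br F xi in
  [/\ (forall s1 s2, g (N s1) s2 = g s1 (N s2)),
      (forall s, nabla s xi = - F s - F (N s)),
      (forall s, F (N s) = - N (F s)),
      [/\ trace e eps N = 0, trace e eps (fun s => N (F s)) = 0,
          N xi = 0 & forall s, eta (N s) = 0]
    & forall s1 s2,
        covF nabla F s1 s2 + covF nabla F (F s1) (F s2)
        = (2 * g s1 s2) *: xi - eta s2 *: (s1 + N s1 + eta s1 *: xi)].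
Proof.
move=> LA VB [AC _ dE_Omega] LC N; split.
- exact: N3_sym LA VB AC dE_Omega.
- exact: nabla_xi LA VB AC LC dE_Omega.
- exact: F_N3 LA VB AC dE_Omega.
- split.
  + exact: trace_N3 LA VB AC dE_Omega.
  + exact: trace_N3F LA VB AC dE_Omega.
  + exact: N3_xi LA VB AC.
  + exact: eta_N3 LA VB AC dE_Omega.
- exact: covF_identity LA VB AC LC dE_Omega.
Qed.
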